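(* The three-dimensional closed convex cone $\mathcal{P}^{s+}_{4,3}$ is a polyhedral cone with exactly four extremal rays, generated respectively by $g_1=T^4_{2,1}-3S^4_{1,1,1}$, $g_2=3S^4_3+3S^4_{1,1,1}-2T^4_{2,1}$, $g_3=S^4_{1,1,1}$, $g_4=S^4_3+3S^4_{1,1,1}-T^4_{2,1}$. Moreover each $g_i$ is characterized in $\mathcal{P}^{s+}_{4,3}$ by equality conditions: if $f\in\mathcal{P}^{s+}_{4,3}$ satisfies $f(1,0,0,0)=f(1,1,1,1)=0$ then $f\in\mathbb{R}_{\ge0}g_1$; $f(1,1,1,0)=f(1,1,1,1)=0$ then $f\in\mathbb{R}_{\ge0}g_2$; $f(1,0,0,0)=f(1,1,0,0)=0$ then $f\in\mathbb{R}_{\ge0}g_3$; $f(1,1,0,0)=f(1,1,1,0)=0$ then $f\in\mathbb{R}_{\ge0}g_4$.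
   Context: Variables $x_1,x_2,x_3,x_4$ (also written $a,b,c,d$). $S^4_3=\sum_{i=1}^4x_i^3$, $T^4_{2,1}=\sum_{i=1}^4x_i^2\sum_{j\ne i}x_j$, $S^4_{1,1,1}=bcd+acd+abd+abc$. $\mathcal{H}^s_{4,3}$ is the real vector space of symmetric homogeneous cubic forms in $\mathbb{R}[a,b,c,d]$ and $\mathcal{P}^{s+}_{4,3}=\{f\in\mathcal{H}^s_{4,3}: f(x)\ge0 \text{ for all } x\in\mathbb{R}_{\ge0}^4\}$. For a closed convex cone $\mathcal{P}$, $f\in\mathcal{P}\setminus\{0\}$ is extremal (generates an extremal ray) if $f=g+h$ with $g,h\in\mathcal{P}$ forces $g,h\in\mathbb{R}_{\ge0}f$. *)

From HB Require Import structures.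
From mathcomp Require Import all_boot all_order all_algebra.
From mathcomp Require Import mpoly.
Set Implicit Arguments.
Unset Strict Implicit.
Unset Printing Implicit Defensive.
Import Order.TTheory GRing.Theory Num.Theory.
Local Open Scope ring_scope.

Section Cubics.
Variable R : realFieldType.

(* variables x_1..x_4 = a,b,c,d are 'X_0 .. 'X_3 *)
Definition S3 : {mpoly R[4]} := \sum_(i < 4) 'X_i ^+ 3.
Definition T21 : {mpoly R[4]} :=
  \sum_(i < 4) ('X_i ^+ 2 * \sum_(j < 4 | j != i) 'X_j).
Definition S111 : {mpoly R[4]} :=
  \sum_(i < 4) \prod_(j < 4 | j != i) 'X_j.

Definition g1 : {mpoly R[4]} := T21 - 3%:R *: S111.
Definition g2 : {mpoly R[4]} := 3%:R *: S3 + 3%:R *: S111 - 2%:R *: T21.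
Definition g3 : {mpoly R[4]} := S111.
Definition g4 : {mpoly R[4]} := S3 + 3%:R *: S111 - T21.

(* g i = g_(i+1) *)
Definition g (i : 'I_4) : {mpoly R[4]} := nth 0 [:: g1; g2; g3; g4] i.

Definition Hs43 (f : {mpoly R[4]}) : Prop :=
  f \is 3.-homog /\ f \is symmetric.

Definition Ps43 (f : {mpoly R[4]}) : Prop :=
  Hs43 f /\ forall x : 'I_4 -> R, (forall i, 0 <= x i) -> 0 <= f.@[x].

Definition in_ray (f h : {mpoly R[4]}) : Prop :=
  exists l : R, 0 <= l /\ h = l *: f.

Definition extremal (P : {mpoly R[4]} -> Prop) (f : {mpoly R[4]}) : Prop :=
  [/\ P f, f != 0 &
      forall u v, P u -> P v -> f = u + v -> in_ray f u /\ in_ray f v].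

Definition pt (a b c d : R) : 'I_4 -> R := fun i => nth 0 [:: a; b; c; d] i.

End Cubics.

(* A symmetric cubic form in four variables is f = a S3 + b T21 + c S111.
   Evaluating at the test points (1,0,0,0), (1,1,0,0), (1,1,1,0), (1,1,1,1)
   gives the linear forms a, 2a+2b, 3a+6b+c, 4a+12b+4c, which must be
   nonnegative when f is nonnegative on the orthant.  The cone they cut out
   in the (a,b,c)-space is spanned by g1, ..., g4, each of which vanishes at
   exactly two test points and is nonnegative on the orthant (g1 is a sum of
   terms x (y - z)^2, g2 a sum of Schur expressions, and g4 reduces to Schur's
   inequality after subtracting the smallest variable).  Hence the
   nonnegativity cone is exactly this polyhedral cone and its edges are the
   rays of the g_i. *)
From HB Require Import structures.
From mathcomp Require Import all_boot all_order all_algebra all_fingroup.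
From mathcomp Require Import mpoly.
From mathcomp Require Import ring lra.

Set Implicit Arguments.
Unset Strict Implicit.
Unset Printing Implicit Defensive.
Import Order.TTheory GRing.Theory Num.Theory.
Local Open Scope ring_scope.

Section Inequalities.
Variable R : realFieldType.
Implicit Types a b c d x y z : R.

Definition schur x y z := x * (x - y) * (x - z) + y * (y - x) * (y - z) + z * (z - x) * (z - y).

Lemma schur_ge0_min x y z : 0 <= z -> z <= x -> z <= y -> 0 <= schur x y z.
Proof.
move=> z_ge0 le_zx le_zy.
have -> : schur x y z = (x - y) ^+ 2 * (x + y - z) + z * ((x - z) * (y - z)).
  by rewrite /schur; ring.
apply: addr_ge0; first by rewrite mulr_ge0 ?sqr_ge0 //; lra.
by rewrite !mulr_ge0 // subr_ge0.
Qed.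

Lemma schur_ge0 x y z : 0 <= x -> 0 <= y -> 0 <= z -> 0 <= schur x y z.
Proof.
move=> x_ge0 y_ge0 z_ge0.
have schur_yzx : schur x y z = schur y z x by rewrite /schur; ring.
have schur_zxy : schur x y z = schur z x y by rewrite /schur; ring.
have [le_zx | lt_xz] := lerP z x; have [le_zy | lt_yz] := lerP z y.
- exact: schur_ge0_min.
- by rewrite schur_zxy schur_ge0_min //; lra.
- by rewrite schur_yzx schur_ge0_min //; lra.
- have [le_xy | lt_yx] := lerP x y.
  + by rewrite schur_yzx schur_ge0_min //; lra.
  + by rewrite schur_zxy schur_ge0_min //; lra.
Qed.

Definition s3 a b c d := a ^+ 3 + b ^+ 3 + c ^+ 3 + d ^+ 3.
Definition t21 a b c d :=
  a ^+ 2 * (b + c + d) + b ^+ 2 * (a + c + d) + c ^+ 2 * (a + b + d) + d ^+ 2 * (a + b + c).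
Definition s111 a b c d := a * b * c + a * b * d + a * c * d + b * c * d.

Lemma three_s111_le_t21 a b c d : 0 <= a -> 0 <= b -> 0 <= c -> 0 <= d ->
  3 * s111 a b c d <= t21 a b c d.
Proof.
move=> a_ge0 b_ge0 c_ge0 d_ge0.
pose q x y z := x * (y - z) ^+ 2 + y * (x - z) ^+ 2 + z * (x - y) ^+ 2.
have -> : t21 a b c d = 3 * s111 a b c d + (q a b c + q a b d + q a c d + q b c d) / 2.
  by rewrite /q /t21 /s111; field.
by rewrite lerDl divr_ge0 // !addr_ge0 // mulr_ge0 ?sqr_ge0.
Qed.

Lemma two_t21_le_s3_s111 a b c d : 0 <= a -> 0 <= b -> 0 <= c -> 0 <= d ->
  2 * t21 a b c d <= 3 * s3 a b c d + 3 * s111 a b c d.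
Proof.
move=> a_ge0 b_ge0 c_ge0 d_ge0; rewrite -subr_ge0.
have -> : 3 * s3 a b c d + 3 * s111 a b c d - 2 * t21 a b c d =
          schur a b c + schur a b d + schur a c d + schur b c d.
  by rewrite /schur /s3 /t21 /s111; ring.
have : [/\ 0 <= schur a b c, 0 <= schur a b d, 0 <= schur a c d & 0 <= schur b c d].
  by split; apply: schur_ge0.
by case; lra.
Qed.

Lemma t21_le_s3_s111_min a b c d : 0 <= d -> d <= a -> d <= b -> d <= c ->
  t21 a b c d <= s3 a b c d + 3 * s111 a b c d.
Proof.
move=> d_ge0 le_da le_db le_dc; rewrite -subr_ge0.
have -> : s3 a b c d + 3 * s111 a b c d - t21 a b c d =
    schur (a - d) (b - d) (c - d) + 4 * d ^+ 3
    + 3 * d ^+ 2 * ((a - d) + (b - d) + (c - d))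
    + 2 * d * ((a - d) * (b - d) + (b - d) * (c - d) + (a - d) * (c - d)).
  by rewrite /schur /s3 /t21 /s111; ring.
have := @schur_ge0 (a - d) (b - d) (c - d).
have : 0 <= d * ((a - d) * (b - d) + (b - d) * (c - d) + (a - d) * (c - d)).
  by rewrite mulr_ge0 // !addr_ge0 // mulr_ge0 // subr_ge0.
have : 0 <= d ^+ 2 * ((a - d) + (b - d) + (c - d)) by rewrite mulr_ge0 ?sqr_ge0 //; lra.
have : 0 <= d ^+ 3 by rewrite exprn_ge0.
rewrite !subr_ge0; lra.
Qed.

Lemma t21_le_s3_s111 a b c d : 0 <= a -> 0 <= b -> 0 <= c -> 0 <= d ->
  t21 a b c d <= s3 a b c d + 3 * s111 a b c d.
Proof.
move=> a_ge0 b_ge0 c_ge0 d_ge0.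
pose e x y z w := s3 x y z w + 3 * s111 x y z w - t21 x y z w.
suff : 0 <= e a b c d by rewrite subr_ge0.
have e_min x y z w : 0 <= w -> w <= x -> w <= y -> w <= z -> 0 <= e x y z w.
  by move=> *; rewrite subr_ge0 t21_le_s3_s111_min.
have e_bcda : e a b c d = e b c d a by rewrite /e /s3 /t21 /s111; ring.
have e_acdb : e a b c d = e a c d b by rewrite /e /s3 /t21 /s111; ring.
have e_abdc : e a b c d = e a b d c by rewrite /e /s3 /t21 /s111; ring.
case: (lerP a b) => ?; case: (lerP c d) => ?.
- by case: (lerP a c) => ?; [rewrite e_bcda | rewrite e_abdc]; apply: e_min; lra.
- by case: (lerP a d) => ?; [rewrite e_bcda |]; apply: e_min; lra.
- by case: (lerP b c) => ?; [rewrite e_acdb | rewrite e_abdc]; apply: e_min; lra.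
- by case: (lerP b d) => ?; [rewrite e_acdb |]; apply: e_min; lra.
Qed.

End Inequalities.

Section SymmetricPolynomials.
Variables (R : comNzRingType) (n : nat).
Local Notation P := {mpoly R[n]}.

Lemma msymXU (s : 'S_n) i : msym s ('X_i : P) = 'X_(s i).
Proof.
rewrite msymX; congr 'X_[_]; apply/mnmP => j; rewrite mnmE !mnm1E.
by congr (nat_of_bool _); apply/eqP/eqP => [->|<-]; rewrite ?permKV ?permK.
Qed.

Lemma power_sum_sym k : \sum_(i < n) ('X_i : P) ^+ k \is symmetric.
Proof.
apply/issymP => s; rewrite rmorph_sum [RHS](reindex_inj (@perm_inj _ s)) /=.
by apply: eq_bigr => i _; rewrite rmorphXn /= msymXU.
Qed.

Lemma mcoeff_sym_perm (p : P) (m m' : 'X_{1..n}) : p \is symmetric ->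
  perm_eq m m' -> p@_m = p@_m'.
Proof.
move=> p_sym /tuple_permP [s m_perm].
rewrite -[RHS](msym_coeff m' s p_sym); congr (_@__).
apply/mnmP => i; rewrite mnmE !mnm_tnth.
by rewrite (tnth_nth 0%N) m_perm -tnth_nth tnth_mktuple.
Qed.

Lemma dhomogX1 i : ('X_i : P) \is 1.-homog.
Proof. by rewrite dhomogX; apply/eqP; apply: mdeg1. Qed.

Definition mnm3 (i j k : 'I_n) : 'X_{1..n} := (U_(i) + U_(j) + U_(k))%MM.

Lemma mnm3E i j k l : mnm3 i j k l = ((i == l) + (j == l) + (k == l))%N.
Proof. by rewrite !mnmDE !mnm1E. Qed.

Lemma mpolyX3 i j k : 'X_i * 'X_j * 'X_k = 'X_[mnm3 i j k] :> P.
Proof. by rewrite -!mpolyXD. Qed.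

End SymmetricPolynomials.

Notation o0 := (@Ordinal 4 0 isT).
Notation o1 := (@Ordinal 4 1 isT).
Notation o2 := (@Ordinal 4 2 isT).
Notation o3 := (@Ordinal 4 3 isT).

Lemma ord4_ind (Q : 'I_4 -> Prop) : Q o0 -> Q o1 -> Q o2 -> Q o3 -> forall i, Q i.
Proof.
move=> Q0 Q1 Q2 Q3 [[|[|[|[|k]]]] lt_k4] //.
- by rewrite (_ : Ordinal lt_k4 = o0) //; apply: val_inj.
- by rewrite (_ : Ordinal lt_k4 = o1) //; apply: val_inj.
- by rewrite (_ : Ordinal lt_k4 = o2) //; apply: val_inj.
- by rewrite (_ : Ordinal lt_k4 = o3) //; apply: val_inj.
Qed.

Lemma sum_ord4 (V : nmodType) (F : 'I_4 -> V) :
  \sum_(i < 4) F i = F o0 + F o1 + F o2 + F o3.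
Proof.
rewrite !big_ord_recl big_ord0 addr0 !addrA.
by congr (F _ + F _ + F _ + F _); apply: val_inj.
Qed.

Lemma prod_ord4 (V : comPzSemiRingType) (F : 'I_4 -> V) :
  \prod_(i < 4) F i = F o0 * F o1 * F o2 * F o3.
Proof.
rewrite !big_ord_recl big_ord0 mulr1 !mulrA.
by congr (F _ * F _ * F _ * F _); apply: val_inj.
Qed.

Lemma eq_mnm4 (m m' : 'X_{1..4}) :
  (m == m') = [&& m o0 == m' o0, m o1 == m' o1, m o2 == m' o2 & m o3 == m' o3].
Proof.
apply/eqP/and4P => [->|[/eqP eq0 /eqP eq1 /eqP eq2 /eqP eq3]]; first by rewrite !eqxx.
by apply/mnmP; apply: ord4_ind.
Qed.

Lemma mdeg3_orbits (m : 'X_{1..4}) : mdeg m = 3%N ->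
  [|| perm_eq m (mnm3 o0 o0 o0), perm_eq m (mnm3 o0 o0 o1) | perm_eq m (mnm3 o0 o1 o2)].
Proof.
have mnm3_tuple i j k (t : 4.-tuple nat) :
    (forall l, mnm3 i j k l = tnth t l) -> mnm3 i j k = t :> seq nat.
  by move=> mnm3_t; congr tval; apply: eq_from_tnth => l; rewrite -mnm_tnth mnm3_t.
rewrite (mnm3_tuple _ _ _ [tuple 3%N; 0%N; 0%N; 0%N]); last by apply: ord4_ind; rewrite mnm3E.
rewrite (mnm3_tuple _ _ _ [tuple 2%N; 1%N; 0%N; 0%N]); last by apply: ord4_ind; rewrite mnm3E.
rewrite (mnm3_tuple _ _ _ [tuple 1%N; 1%N; 1%N; 0%N]); last by apply: ord4_ind; rewrite mnm3E.
rewrite mdegE sum_ord4.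
case: m => [[[|x0 [|x1 [|x2 [|x3 [|]]]]] // size_m]] /= /eqP.
by move: x0 x1 x2 x3 size_m => [|[|[|[|x0]]]] [|[|[|[|x1]]]] [|[|[|[|x2]]]] [|[|[|[|x3]]]].
Qed.

Section SymmetricCubics.
Variable R : realFieldType.
Local Notation P := {mpoly R[4]}.
Local Notation X0 := ('X_o0 : P).
Local Notation X1 := ('X_o1 : P).
Local Notation X2 := ('X_o2 : P).
Local Notation X3 := ('X_o3 : P).

Lemma S3E : S3 R = X0 ^+ 3 + X1 ^+ 3 + X2 ^+ 3 + X3 ^+ 3.
Proof. by rewrite /S3 sum_ord4. Qed.

Lemma T21E : T21 R = X0 ^+ 2 * (X1 + X2 + X3) + X1 ^+ 2 * (X0 + X2 + X3)
                   + X2 ^+ 2 * (X0 + X1 + X3) + X3 ^+ 2 * (X0 + X1 + X2).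
Proof. by rewrite /T21 sum_ord4 !(big_mkcond (fun j => j != _)) !sum_ord4 /= !add0r !addr0. Qed.

Lemma S111E : S111 R = X1 * X2 * X3 + X0 * X2 * X3 + X0 * X1 * X3
                     + X0 * X1 * X2.
Proof. by rewrite /S111 sum_ord4 !(big_mkcond (fun j => j != _)) !prod_ord4 /= !mul1r !mulr1. Qed.

Lemma T21_power_sums :
  T21 R = (\sum_(i < 4) ('X_i : P) ^+ 2) * (\sum_(i < 4) ('X_i : P) ^+ 1) - S3 R.
Proof.
rewrite /T21 /S3 mulr_suml -sumrB; apply: eq_bigr => i _.
rewrite [in RHS](bigD1 i) //= mulrDr expr1 -exprSr.
by rewrite addrAC subrr add0r.
Qed.

Lemma S3_sym : S3 R \is symmetric.
Proof. exact: power_sum_sym. Qed.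

Lemma T21_sym : T21 R \is symmetric.
Proof. by rewrite T21_power_sums rpredB ?rpredM ?power_sum_sym ?S3_sym. Qed.

Lemma S111_sym : S111 R \is symmetric.
Proof.
apply/issymP => s; rewrite /S111 rmorph_sum [RHS](reindex_inj (@perm_inj _ s)) /=.
apply: eq_bigr => i _; rewrite rmorph_prod [RHS](reindex_inj (@perm_inj _ s)) /=.
by apply: eq_big => [j|j _]; rewrite ?(inj_eq (@perm_inj _ s)) ?msymXU.
Qed.

Lemma S3_homog : S3 R \is 3.-homog.
Proof. by rewrite S3E !rpredD // (dhomogMn 3 (dhomogX1 _ _)). Qed.

Lemma T21_homog : T21 R \is 3.-homog.
Proof.
by rewrite T21E !rpredD // (dhomogM (dhomogMn 2 (dhomogX1 _ _))) // !rpredD // dhomogX1.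
Qed.

Lemma S111_homog : S111 R \is 3.-homog.
Proof.
by rewrite S111E !rpredD // !(dhomogM (dhomogM (dhomogX1 _ _) (dhomogX1 _ _)) (dhomogX1 _ _)).
Qed.

Definition cubic (a b c : R) : P := a *: S3 R + b *: T21 R + c *: S111 R.

Lemma cubic_Hs43 a b c : Hs43 (cubic a b c).
Proof.
split.
- by rewrite /cubic !rpredD // dhomogZ // (S3_homog, T21_homog, S111_homog).
- by rewrite /cubic !rpredD // rpredZ // (S3_sym, T21_sym, S111_sym).
Qed.

Lemma meval_cubic a b c (x : 'I_4 -> R) : (cubic a b c).@[x] =
  a * s3 (x o0) (x o1) (x o2) (x o3) + b * t21 (x o0) (x o1) (x o2) (x o3)
  + c * s111 (x o0) (x o1) (x o2) (x o3).
Proof.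
rewrite /cubic S3E T21E S111E !(mevalD, mevalZ, mevalM, rmorphXn, mevalXU).
by rewrite /s3 /t21 /s111; ring.
Qed.

Lemma mcoeff_cubic a b c : [/\ (cubic a b c)@_(mnm3 o0 o0 o0) = a,
  (cubic a b c)@_(mnm3 o0 o0 o1) = b & (cubic a b c)@_(mnm3 o0 o1 o2) = c].
Proof.
rewrite /cubic S3E T21E S111E !mulrDr !exprS !expr0 !mulr1 !mulrA !mpolyX3.
by split; rewrite !(mcoeffD, mcoeffZ, mcoeffX) !eq_mnm4 !mnm3E /=; ring.
Qed.

Lemma Hs43_cubic f : Hs43 f ->
  f = cubic f@_(mnm3 o0 o0 o0) f@_(mnm3 o0 o0 o1) f@_(mnm3 o0 o1 o2).
Proof.
case=> f_homog f_sym; set c := cubic _ _ _.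
have [c_homog c_sym] : Hs43 c by exact: cubic_Hs43.
have [cE1 cE2 cE3] := mcoeff_cubic f@_(mnm3 o0 o0 o0) f@_(mnm3 o0 o0 o1) f@_(mnm3 o0 o1 o2).
apply/mpolyP => m; have [deg_m|deg_m] := eqVneq (mdeg m) 3%N; last first.
  by rewrite (dhomog_nemf_coeff f_homog deg_m) (dhomog_nemf_coeff c_homog deg_m).
case/or3P: (mdeg3_orbits deg_m) => m_perm.
- by rewrite (mcoeff_sym_perm f_sym m_perm) (mcoeff_sym_perm c_sym m_perm) cE1.
- by rewrite (mcoeff_sym_perm f_sym m_perm) (mcoeff_sym_perm c_sym m_perm) cE2.
- by rewrite (mcoeff_sym_perm f_sym m_perm) (mcoeff_sym_perm c_sym m_perm) cE3.
Qed.

Lemma cubic_inj a b c a' b' c' :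
  cubic a b c = cubic a' b' c' -> [/\ a = a', b = b' & c = c'].
Proof.
move=> eq_cubic; have [a_E b_E c_E] := mcoeff_cubic a b c.
have [a'_E b'_E c'_E] := mcoeff_cubic a' b' c'.
by split; [rewrite -a_E -a'_E | rewrite -b_E -b'_E | rewrite -c_E -c'_E]; rewrite eq_cubic.
Qed.

Lemma cubicZ k a b c : k *: cubic a b c = cubic (k * a) (k * b) (k * c).
Proof.
rewrite /cubic -!mul_mpolyC !mpolyCM.
by move: (S3 R) (T21 R) (S111 R) => ? ? ?; ring.
Qed.

Lemma cubicD a b c a' b' c' :
  cubic a b c + cubic a' b' c' = cubic (a + a') (b + b') (c + c').
Proof.
rewrite /cubic -!mul_mpolyC !mpolyCD.
by move: (S3 R) (T21 R) (S111 R) => ? ? ?; ring.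
Qed.

Lemma cubic0 : cubic 0 0 0 = 0.
Proof. by rewrite /cubic !scale0r !addr0. Qed.

Lemma g_cubic :
  [/\ g1 R = cubic 0 1 (-3), g2 R = cubic 3 (-2) 3, g3 R = cubic 0 0 1
    & g4 R = cubic 1 (-1) 3].
Proof.
rewrite /g1 /g2 /g3 /g4 /cubic -!mul_mpolyC !(mpolyCN, mpolyC0, mpolyC1).
by split; move: (S3 R) (T21 R) (S111 R) => ? ? ?; ring.
Qed.

Lemma g_cases i : [\/ g R i = cubic 0 1 (-3), g R i = cubic 3 (-2) 3,
                      g R i = cubic 0 0 1 | g R i = cubic 1 (-1) 3].
Proof.
have [g1E g2E g3E g4E] := g_cubic.
move: i; apply: ord4_ind; rewrite /g /= ?g1E ?g2E ?g3E ?g4E.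
all: by [apply: Or41 | apply: Or42 | apply: Or43 | apply: Or44].
Qed.

Lemma sum_g_cubic (l : 'I_4 -> R) : \sum_(i < 4) l i *: g R i =
  cubic (3 * l o1 + l o3) (l o0 - 2 * l o1 - l o3) (- 3 * l o0 + 3 * l o1 + l o2 + 3 * l o3).
Proof.
have [g1E g2E g3E g4E] := g_cubic.
by rewrite sum_ord4 /g /= g1E g2E g3E g4E !cubicZ !cubicD; congr cubic; ring.
Qed.

Lemma meval_cubic_test_points a b c :
  [/\ (cubic a b c).@[pt 1 0 0 0] = a, (cubic a b c).@[pt 1 1 0 0] = 2 * a + 2 * b,
      (cubic a b c).@[pt 1 1 1 0] = 3 * a + 6 * b + c
    & (cubic a b c).@[pt 1 1 1 1] = 4 * a + 12 * b + 4 * c].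
Proof. by split; rewrite meval_cubic /pt /= /s3 /t21 /s111; ring. Qed.

Lemma pt_ge0 (a b c d : R) : 0 <= a -> 0 <= b -> 0 <= c -> 0 <= d ->
  forall i, 0 <= pt a b c d i.
Proof. by move=> a_ge0 b_ge0 c_ge0 d_ge0; apply: ord4_ind. Qed.

Lemma Ps43_cubic f : Ps43 f -> exists a b c, f = cubic a b c /\
  [/\ 0 <= a, 0 <= 2 * a + 2 * b, 0 <= 3 * a + 6 * b + c & 0 <= 4 * a + 12 * b + 4 * c].
Proof.
case=> /Hs43_cubic f_cubic f_ge0; set a := f@_ _ in f_cubic; set b := f@_ _ in f_cubic.
set c := f@_ _ in f_cubic; exists a, b, c; split => //.
have [v1 v2 v3 v4] := meval_cubic_test_points a b c.
split; [rewrite -v1 | rewrite -v2 | rewrite -v3 | rewrite -v4];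
  by rewrite -f_cubic; apply: f_ge0; apply: pt_ge0; rewrite ?lexx ?ler01.
Qed.

Lemma Ps43_0 : Ps43 (0 : P).
Proof. by split; [rewrite /Hs43 !rpred0 | move=> x _; rewrite meval0]. Qed.

Lemma Ps43D (u v : P) : Ps43 u -> Ps43 v -> Ps43 (u + v).
Proof.
case=> [[u_homog u_sym] u_ge0] [[v_homog v_sym] v_ge0].
split; first by split; rewrite rpredD.
by move=> x x_ge0; rewrite mevalD addr_ge0 ?u_ge0 ?v_ge0.
Qed.

Lemma Ps43Z k (u : P) : 0 <= k -> Ps43 u -> Ps43 (k *: u).
Proof.
move=> k_ge0 [[u_homog u_sym] u_ge0]; split; first by split; rewrite ?rpredZ ?dhomogZ.
by move=> x x_ge0; rewrite mevalZ mulr_ge0 ?u_ge0.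
Qed.

Lemma g_ge0 i (x : 'I_4 -> R) : (forall j, 0 <= x j) -> 0 <= (g R i).@[x].
Proof.
move=> x_ge0; move: (x_ge0 o0) (x_ge0 o1) (x_ge0 o2) (x_ge0 o3) => x0 x1 x2 x3.
have := three_s111_le_t21 x0 x1 x2 x3; have := two_t21_le_s3_s111 x0 x1 x2 x3.
have := t21_le_s3_s111 x0 x1 x2 x3.
have : 0 <= s111 (x o0) (x o1) (x o2) (x o3) by rewrite /s111 !addr_ge0 ?mulr_ge0.
by case: (g_cases i) => ->; rewrite meval_cubic; lra.
Qed.

Lemma Ps43_g i : Ps43 (g R i).
Proof.
split; last exact: g_ge0.
by case: (g_cases i) => ->; apply: cubic_Hs43.
Qed.

Lemma Ps43_cone (l : 'I_4 -> R) (Q : pred 'I_4) : (forall i, 0 <= l i) ->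
  Ps43 (\sum_(i < 4 | Q i) l i *: g R i).
Proof.
move=> l_ge0; apply: (big_ind (@Ps43 R)); [exact: Ps43_0 | exact: Ps43D |].
by move=> i _; apply: Ps43Z; [apply: l_ge0 | apply: Ps43_g].
Qed.

Lemma g_neq0 i : g R i != 0.
Proof.
by case: (g_cases i) => ->; apply/eqP; rewrite -cubic0 => /cubic_inj []; lra.
Qed.

Lemma in_ray_g1 a b c : 0 <= 2 * a + 2 * b -> a = 0 -> 4 * a + 12 * b + 4 * c = 0 ->
  in_ray (g1 R) (cubic a b c).
Proof.
have [-> _ _ _] := g_cubic.
by move=> *; exists b; split; [lra | rewrite cubicZ; congr cubic; lra].
Qed.

Lemma in_ray_g2 a b c : 0 <= a -> 3 * a + 6 * b + c = 0 -> 4 * a + 12 * b + 4 * c = 0 ->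
  in_ray (g2 R) (cubic a b c).
Proof.
have [_ -> _ _] := g_cubic.
by move=> *; exists (a / 3); split; [lra | rewrite cubicZ; congr cubic; lra].
Qed.

Lemma in_ray_g3 a b c : 0 <= 3 * a + 6 * b + c -> a = 0 -> 2 * a + 2 * b = 0 ->
  in_ray (g3 R) (cubic a b c).
Proof.
have [_ _ -> _] := g_cubic.
by move=> *; exists c; split; [lra | rewrite cubicZ; congr cubic; lra].
Qed.

Lemma in_ray_g4 a b c : 0 <= a -> 2 * a + 2 * b = 0 -> 3 * a + 6 * b + c = 0 ->
  in_ray (g4 R) (cubic a b c).
Proof.
have [_ _ _ ->] := g_cubic.
by move=> *; exists a; split; [lra | rewrite cubicZ; congr cubic; lra].
Qed.

Lemma Ps43_in_ray_g f : Ps43 f ->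
  [/\ f.@[pt 1 0 0 0] = 0 -> f.@[pt 1 1 1 1] = 0 -> in_ray (g1 R) f,
      f.@[pt 1 1 1 0] = 0 -> f.@[pt 1 1 1 1] = 0 -> in_ray (g2 R) f,
      f.@[pt 1 0 0 0] = 0 -> f.@[pt 1 1 0 0] = 0 -> in_ray (g3 R) f
    & f.@[pt 1 1 0 0] = 0 -> f.@[pt 1 1 1 0] = 0 -> in_ray (g4 R) f].
Proof.
case/Ps43_cubic => a [b [c [-> [v1_ge0 v2_ge0 v3_ge0 v4_ge0]]]].
have [-> -> -> ->] := meval_cubic_test_points a b c.
split=> v_eq0 v'_eq0.
- exact: in_ray_g1.
- exact: in_ray_g2.
- exact: in_ray_g3.
- exact: in_ray_g4.
Qed.

Lemma extremal_g i : extremal (@Ps43 R) (g R i).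
Proof.
split; [exact: Ps43_g | exact: g_neq0 |] => u v /Ps43_cubic + /Ps43_cubic.
move=> [a [b [c [-> [u1 u2 u3 u4]]]]] [a' [b' [c' [-> [v1 v2 v3 v4]]]]].
have [g1E g2E g3E g4E] := g_cubic.
rewrite cubicD; move: i; apply: ord4_ind; rewrite /g /=.
- by rewrite {1}g1E => /cubic_inj [? ? ?]; split; apply: in_ray_g1; lra.
- by rewrite {1}g2E => /cubic_inj [? ? ?]; split; apply: in_ray_g2; lra.
- by rewrite {1}g3E => /cubic_inj [? ? ?]; split; apply: in_ray_g3; lra.
- by rewrite {1}g4E => /cubic_inj [? ? ?]; split; apply: in_ray_g4; lra.
Qed.

(* The cone {a >= 0, 2a + 2b >= 0, 3a + 6b + c >= 0, 4a + 12b + 4c >= 0} is the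
   union of the two simplicial cones spanned by g1, g2, g3 and by g2, g3, g4,
   separated by the plane 2a + 3b = 0. *)
Lemma Ps43P f : Ps43 f <->
  exists l : 'I_4 -> R, (forall i, 0 <= l i) /\ f = \sum_(i < 4) l i *: g R i.
Proof.
split=> [/Ps43_cubic [a [b [c [-> [v1 v2 v3 v4]]]]] | [l [l_ge0 ->]]]; last first.
  exact: Ps43_cone.
have [le_a_3ab | lt_3ab_a] := lerP a (3 * (a + b)).
- exists (fun i => nth 0 [:: a + b - a / 3; a / 3; a + 3 * b + c; 0] i).
  split; first by apply: ord4_ind => /=; lra.
  by rewrite sum_g_cubic /=; congr cubic; lra.
- exists (fun i => nth 0 [:: 0; a + b; 3 * a + 6 * b + c; a - 3 * (a + b)] i).
  split; first by apply: ord4_ind => /=; lra.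
  by rewrite sum_g_cubic /=; congr cubic; lra.
Qed.

Lemma extremal_in_ray_g f : extremal (@Ps43 R) f -> exists i, in_ray (g R i) f.
Proof.
case=> /Ps43P [l [l_ge0 f_sum]] f_neq0 f_extremal.
have [i l_gt0 | l_le0] := pickP (fun i => 0 < l i); last first.
  case/eqP: f_neq0; rewrite f_sum big1 // => i _.
  move: (l_ge0 i) (l_le0 i) => /=; rewrite le_eqVlt => /orP [/eqP <- _ | -> //].
  by rewrite scale0r.
exists i.
have f_split : f = l i *: g R i + \sum_(j < 4 | j != i) l j *: g R j.
  by rewrite f_sum (bigD1 i).
have [[k [k_ge0 l_g_k]] _] :=
  f_extremal _ _ (Ps43Z (l_ge0 i) (Ps43_g i)) (Ps43_cone _ l_ge0) f_split.
have k_neq0 : k != 0.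
  apply: contraTneq l_gt0 => k0; move/eqP: l_g_k; rewrite k0 scale0r.
  by rewrite scaler_eq0 (negbTE (g_neq0 i)) orbF => /eqP ->; rewrite ltxx.
exists (k^-1 * l i); split; first by rewrite mulr_ge0 ?invr_ge0.
by rewrite -scalerA l_g_k scalerA mulVf // scale1r.
Qed.

Lemma g_not_in_ray i j : i != j -> ~ in_ray (g R j) (g R i).
Proof.
have [g1E g2E g3E g4E] := g_cubic.
move: i; apply: ord4_ind; move: j; apply: ord4_ind => //= _ [l [l_ge0]].
all: by rewrite /g /= ?g1E ?g2E ?g3E ?g4E cubicZ => /cubic_inj []; lra.
Qed.

Lemma Hs43_span_g123 f : Hs43 f ->
  exists c1 c2 c3, f = c1 *: g1 R + c2 *: g2 R + c3 *: g3 R.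
Proof.
move/Hs43_cubic => f_cubic; rewrite {}f_cubic; set a := f@_ _; set b := f@_ _; set c := f@_ _.
exists (b + 2 * a / 3), (a / 3), (c + 3 * b + a).
by have [-> -> -> _] := g_cubic; rewrite !cubicZ !cubicD; congr cubic; lra.
Qed.

Lemma g123_free c1 c2 c3 : c1 *: g1 R + c2 *: g2 R + c3 *: g3 R = 0 ->
  [/\ c1 = 0, c2 = 0 & c3 = 0].
Proof.
have [-> -> -> _] := g_cubic.
by rewrite !cubicZ !cubicD -cubic0 => /cubic_inj [? ? ?]; split; lra.
Qed.

End SymmetricCubics.

Theorem proposition1p6 (R : realFieldType) :
  [/\ forall f : {mpoly R[4]}, Hs43 f ->
        exists c1 c2 c3 : R, f = c1 *: g1 R + c2 *: g2 R + c3 *: g3 R,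
      forall c1 c2 c3 : R, c1 *: g1 R + c2 *: g2 R + c3 *: g3 R = 0 ->
        [/\ c1 = 0, c2 = 0 & c3 = 0]
   &  forall i, Hs43 (g R i)] /\
  (forall f : {mpoly R[4]}, Ps43 f <->
     exists l : 'I_4 -> R, (forall i, 0 <= l i) /\ f = \sum_(i < 4) l i *: g R i) /\
  [/\ forall i, extremal (@Ps43 R) (g R i),
      forall f, extremal (@Ps43 R) f -> exists i, in_ray (g R i) f
   &  forall i j, i != j -> ~ in_ray (g R j) (g R i)] /\
  (forall f : {mpoly R[4]}, Ps43 f ->
     [/\ f.@[pt 1 0 0 0] = 0 -> f.@[pt 1 1 1 1] = 0 -> in_ray (g1 R) f,
         f.@[pt 1 1 1 0] = 0 -> f.@[pt 1 1 1 1] = 0 -> in_ray (g2 R) f,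
         f.@[pt 1 0 0 0] = 0 -> f.@[pt 1 1 0 0] = 0 -> in_ray (g3 R) f
       & f.@[pt 1 1 0 0] = 0 -> f.@[pt 1 1 1 0] = 0 -> in_ray (g4 R) f]).
Proof.
split; first by split; [exact: Hs43_span_g123 | exact: g123_free | move=> i; case: (Ps43_g R i)].
split; first exact: Ps43P.
split; first by split; [exact: extremal_g | exact: extremal_in_ray_g | exact: g_not_in_ray].
exact: Ps43_in_ray_g.
Qed.
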